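(* Let $\mathcal F$ be a proper filter on $\omega$. The game $\mathfrak G(\mathcal F^+,[\omega]^{<\omega},\mathcal F^c)$ is dual to the game $\mathfrak G(\mathcal F,\omega,\mathcal F)$ (a player has a winning strategy in one iff the other player has one in the other). Consequently, in $\mathfrak G(\mathcal F^+,[\omega]^{<\omega},\mathcal F^c)$, player I never has a winning strategy, and player II has a winning strategy if and only if $\mathcal F$ is not Ramsey.
   Context: A filter on $\omega$ is a family $\mathcal F\subseteq\mathcal P(\omega)$ closed under finite intersections and supersets and containing all cofinite sets; it is proper if all its members are infinite. $\mathcal F^+=\{X:\omega\setminus X\notin\mathcal F\}$, $\mathcal F^c=\mathcal P(\omega)\setminus\mathcal F$. Game $\mathfrak G(\mathcal X,\omega,\mathcal Z)$: at each stage $k$, I chooses $X_k\in\mathcal X$ and II responds with $n_k\in X_k$; II wins if $\{n_k:k\in\omega\}\in\mathcal Z$. Game $\mathfrak G(\mathcal X,[\omega]^{<\omega},\mathcal Z)$: at each stage $k$, I chooses $X_k\in\mathcal X$ and II responds with a nonempty finite $s_k\subseteq X_k$; II wins if $\bigcup_k s_k\in\mathcal Z$. In each game I wins when II does not. A tree is a set $T$ of finite sequences of natural numbers containing the empty sequence and closed under initial segments; it is an $\mathcal F$-tree if for each $\bar s\in T$ there is $X_{\bar s}\in\mathcal F$ with $\bar s^\frown n\in T$ for all $n\in X_{\bar s}$; a branch (infinite sequence with all initial segments in $T$) is in $\mathcal F$ if its set of values is in $\mathcal F$. $\mathcal F$ is Ramsey if every $\mathcal F$-tree has a branch in $\mathcal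 F$. *)

From Stdlib Require Import List Arith.
Import ListNotations.

Definition setN := nat -> Prop.
Definition family := setN -> Prop.

Definition subsetN (A B : setN) : Prop := forall n, A n -> B n.
Definition cofinite (A : setN) : Prop := exists m, forall n, m <= n -> A n.
Definition infinite (A : setN) : Prop := forall m, exists n, m <= n /\ A n.
Definition complN (A : setN) : setN := fun n => ~ A n.

Definition is_filter (F : family) : Prop :=
  (forall A B, F A -> F B -> F (fun n => A n /\ B n)) /\
  (forall A B, F A -> subsetN A B -> F B) /\
  (forall A, cofinite A -> F A).

Definition proper_filter (F : family) : Prop :=
  is_filter F /\ forall A, F A -> infinite A.

Definition Fplus (F : family) : family := fun X => ~ F (complN X).
Definition Fcompl (F : family) : family := fun X => ~ F X.

Definition prefix {T : Type} (f : nat -> T) (k : nat) : list T := map f (seq 0 k).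

(* Strategy of I: from II's previous moves n_0..n_{k-1} to I's move X_k. *)
Definition stratI_nat := list nat -> setN.
(* Strategy of II: from I's moves X_0..X_k to II's response n_k. *)
Definition stratII_nat := list setN -> nat.

Definition I_wins_nat (X Z : family) : Prop :=
  exists sigma : stratI_nat,
    (forall h, X (sigma h)) /\
    forall n : nat -> nat,
      (forall k, sigma (prefix n k) (n k)) ->
      ~ Z (fun m => exists k, n k = m).

Definition II_wins_nat (X Z : family) : Prop :=
  exists tau : stratII_nat,
    forall Xs : nat -> setN, (forall k, X (Xs k)) ->
      (forall k, Xs k (tau (prefix Xs (S k)))) /\
      Z (fun m => exists k, tau (prefix Xs (S k)) = m).

(* finite sets are represented by lists of naturals *)
Definition stratI_fin := list (list nat) -> setN.
Definition stratII_fin := list setN -> list nat.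

Definition I_wins_fin (X Z : family) : Prop :=
  exists sigma : stratI_fin,
    (forall h, X (sigma h)) /\
    forall s : nat -> list nat,
      (forall k, s k <> [] /\ forall x, In x (s k) -> sigma (prefix s k) x) ->
      ~ Z (fun m => exists k, In m (s k)).

Definition II_wins_fin (X Z : family) : Prop :=
  exists tau : stratII_fin,
    forall Xs : nat -> setN, (forall k, X (Xs k)) ->
      (forall k, tau (prefix Xs (S k)) <> [] /\
                 forall x, In x (tau (prefix Xs (S k))) -> Xs k x) /\
      Z (fun m => exists k, In m (tau (prefix Xs (S k)))).

Definition is_tree (T : list nat -> Prop) : Prop :=
  T [] /\ forall s t, T (s ++ t) -> T s.

Definition is_F_tree (F : family) (T : list nat -> Prop) : Prop :=
  is_tree T /\
  forall s, T s -> exists Xs, F Xs /\ forall n, Xs n -> T (s ++ [n]).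

Definition is_branch (T : list nat -> Prop) (b : nat -> nat) : Prop :=
  forall k, T (prefix b k).

Definition branch_in (F : family) (b : nat -> nat) : Prop :=
  F (fun m => exists k, b k = m).

Definition Ramsey (F : family) : Prop :=
  forall T, is_F_tree F T -> exists b, is_branch T b /\ branch_in F b.

(** If I plays sets [X_k]
    of one family against a strategy of the other player whose moves lie in the
    dual family, a set of [F] always meets a set of [F^+], so the translated
    player can answer a single point of the intersection, producing a legal play
    of both games at once.  In the other direction, a winning strategy [tau] of
    II in the finite-set game yields the strategy for I which plays the set of
    points that [tau] could answer at the current position; this set is in [F],
    since otherwise I could play its complement.  Player II has no winning
    strategy in [G(F, omega, F)]: running it against two plays of tails
    [\[m, omega)] with interleaved bounds yields two disjoint sets of [F]; by
    the translation, I cannot win [G(F^+, [omega]^{<omega}, F^c)] either.  The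
    Ramsey characterisation is the usual translation between strategies of I and
    [F]-trees. *)

From Stdlib Require Import List Arith Lia Classical ClassicalEpsilon.
Import ListNotations.

Lemma prefix_S {T : Type} (f : nat -> T) (k : nat) :
  prefix f (S k) = prefix f k ++ [f k].
Proof. unfold prefix. now rewrite seq_S, map_app. Qed.

Lemma prefix_nth {T : Type} (l : list T) (d : T) :
  prefix (fun k => nth k l d) (length l) = l.
Proof.
  induction l as [|x l IH] using rev_ind; [reflexivity|].
  rewrite length_app, Nat.add_1_r, prefix_S, nth_middle.
  f_equal. rewrite <- IH at 2. unfold prefix. apply map_ext_in.
  intros k Hk. apply in_seq in Hk. apply app_nth1. lia.
Qed.

Definition above (m : nat) : setN := fun n => m <= n.

(* II answers a move [Y] of I by a point of [Y] inside the set that a strategy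
   [c] of I in the dual game prescribes after the answers [h] given so far. *)
Definition greedy (c : list nat -> setN) (l : list setN) : list nat :=
  fold_left (fun h Y => h ++ [epsilon (inhabits 0) (fun x => Y x /\ c h x)]) l [].

Definition greedy_answer (c : list nat -> setN) (l : list setN) : nat :=
  last (greedy c l) 0.

Definition greedy_seq (c : list nat -> setN) (Xs : nat -> setN) (k : nat) : nat :=
  greedy_answer c (prefix Xs (S k)).

Lemma greedy_snoc (c : list nat -> setN) (l : list setN) (Y : setN) :
  greedy c (l ++ [Y]) =
  greedy c l ++ [epsilon (inhabits 0) (fun x => Y x /\ c (greedy c l) x)].
Proof. unfold greedy. now rewrite fold_left_app. Qed.

Lemma greedy_prefix (c : list nat -> setN) (Xs : nat -> setN) (k : nat) :
  greedy c (prefix Xs k) = prefix (greedy_seq c Xs) k.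
Proof.
  induction k as [|k IH]; [reflexivity|].
  rewrite !prefix_S, greedy_snoc, IH. f_equal. f_equal.
  unfold greedy_seq, greedy_answer. now rewrite prefix_S, greedy_snoc, last_last, IH.
Qed.

Lemma greedy_seq_spec (c : list nat -> setN) (Xs : nat -> setN) :
  (forall h k, exists x, Xs k x /\ c h x) ->
  forall k, Xs k (greedy_seq c Xs k) /\ c (prefix (greedy_seq c Xs) k) (greedy_seq c Xs k).
Proof.
  intros Hmeet k. unfold greedy_seq at 1 3, greedy_answer.
  rewrite prefix_S, greedy_snoc, last_last, greedy_prefix.
  apply epsilon_spec, Hmeet.
Qed.

Inductive obeys (sigma : stratI_nat) : list nat -> Prop :=
  | obeys_nil : obeys sigma []
  | obeys_snoc h n : obeys sigma h -> sigma h n -> obeys sigma (h ++ [n]).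

Lemma obeys_snoc_inv (sigma : stratI_nat) (h : list nat) (n : nat) :
  obeys sigma (h ++ [n]) -> obeys sigma h /\ sigma h n.
Proof.
  inversion 1 as [E|h' n' Hh Hs E].
  - now destruct h.
  - apply app_inj_tail in E as [-> ->]. auto.
Qed.

Lemma obeys_app (sigma : stratI_nat) (s t : list nat) :
  obeys sigma (s ++ t) -> obeys sigma s.
Proof.
  induction t as [|x t IH] using rev_ind.
  - now rewrite app_nil_r.
  - rewrite app_assoc. intros H. now apply IH, (obeys_snoc_inv sigma _ x).
Qed.

Lemma obeys_branch (sigma : stratI_nat) (b : nat -> nat) :
  is_branch (obeys sigma) b -> forall k, sigma (prefix b k) (b k).
Proof.
  intros Hb k. specialize (Hb (S k)). rewrite prefix_S in Hb.
  now apply obeys_snoc_inv.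
Qed.

Section Interleaving.

Variable tau : stratII_nat.

(* Two plays in which I only plays tails: each move of I in one play starts
   above the last answer of II in the other. *)
Fixpoint interleave (k : nat) : list setN * list setN * nat :=
  match k with
  | 0 => ([], [], 0)
  | S k =>
      let '(p, q, m) := interleave k in
      let a := tau (p ++ [above m]) in
      (p ++ [above m], q ++ [above (S a)], S (tau (q ++ [above (S a)])))
  end.

Definition play1 (k : nat) : list setN := fst (fst (interleave k)).
Definition play2 (k : nat) : list setN := snd (fst (interleave k)).
Definition bound (k : nat) : nat := snd (interleave k).
Definition answer1 (k : nat) : nat := tau (play1 k ++ [above (bound k)]).
Definition answer2 (k : nat) : nat := tau (play2 k ++ [above (S (answer1 k))]).

Lemma interleave_S (k : nat) :
  play1 (S k) = play1 k ++ [above (bound k)] /\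
  play2 (S k) = play2 k ++ [above (S (answer1 k))] /\
  bound (S k) = S (answer2 k).
Proof.
  unfold answer2, answer1, play1, play2, bound; simpl.
  destruct (interleave k) as [[p q] m]. auto.
Qed.

Lemma play1_prefix (k : nat) : play1 k = prefix (fun j => above (bound j)) k.
Proof.
  induction k as [|k IH]; [reflexivity|].
  now rewrite prefix_S, (proj1 (interleave_S k)), IH.
Qed.

Lemma play2_prefix (k : nat) : play2 k = prefix (fun j => above (S (answer1 j))) k.
Proof.
  induction k as [|k IH]; [reflexivity|].
  now rewrite prefix_S, (proj1 (proj2 (interleave_S k))), IH.
Qed.

End Interleaving.

Lemma interleaved_disjoint (m a b : nat -> nat) :
  (forall k, m k <= a k) -> (forall k, a k < b k) -> (forall k, m (S k) = S (b k)) ->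
  forall i j, a i <> b j.
Proof.
  intros Hma Hab Hbm.
  assert (Hba : forall i j, i < j -> b i < a j).
  { intros i j; induction j as [|j IH]; intros Hij; [lia|].
    pose proof (Hab j); pose proof (Hma (S j)); pose proof (Hbm j).
    destruct (Nat.eq_dec i j); [subst; lia|].
    assert (b i < a j) by (apply IH; lia). lia. }
  intros i j. destruct (lt_eq_lt_dec i j) as [[Hij|<-]|Hji].
  - pose proof (Hba i j Hij); pose proof (Hab i); pose proof (Hab j). lia.
  - pose proof (Hab i). lia.
  - pose proof (Hba j i Hji). lia.
Qed.

Section ProperFilter.

Variable F : family.
Hypothesis HF : proper_filter F.

Lemma filter_superset (A B : setN) : F A -> subsetN A B -> F B.
Proof. apply (proj1 (proj2 (proj1 HF))). Qed.

Lemma filter_above (m : nat) : F (above m).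
Proof. apply HF. exists m. auto. Qed.

Lemma filter_full : F (fun _ => True).
Proof. apply HF. exists 0. auto. Qed.

Lemma filter_meet (A B : setN) : F A -> F B -> exists m, A m /\ B m.
Proof.
  intros HA HB. destruct HF as [[Hint _] Hinf].
  destruct (Hinf _ (Hint _ _ HA HB) 0) as [m [_ Hm]]. eauto.
Qed.

Lemma Fplus_meets (Y A : setN) : Fplus F Y -> F A -> exists x, Y x /\ A x.
Proof.
  intros HY HA. apply NNPP. intro Hno. apply HY.
  apply (filter_superset A); [exact HA|]. intros n Hn HYn. eauto.
Qed.

Lemma Fplus_full : Fplus F (fun _ => True).
Proof.
  intro H. destruct (filter_meet _ _ H filter_full) as [n [Hn _]]. now apply Hn.
Qed.

Lemma Fplus_complN (A : setN) : ~ F A -> Fplus F (complN A).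
Proof.
  intros HA H. apply HA. apply (filter_superset _ _ H).
  intros n Hn. now apply NNPP.
Qed.

Lemma not_II_wins_nat : ~ II_wins_nat F F.
Proof.
  intros [tau Htau].
  destruct (Htau _ (fun j => filter_above (bound tau j))) as [Hlegal1 Hwin1].
  destruct (Htau _ (fun j => filter_above (S (answer1 tau j)))) as [Hlegal2 Hwin2].
  assert (E1 : forall k, tau (prefix (fun j => above (bound tau j)) (S k)) = answer1 tau k).
  { intro k. now rewrite prefix_S, <- play1_prefix. }
  assert (E2 : forall k,
             tau (prefix (fun j => above (S (answer1 tau j))) (S k)) = answer2 tau k).
  { intro k. now rewrite prefix_S, <- play2_prefix. }
  destruct (filter_meet _ _ Hwin1 Hwin2) as [n [[i Hi] [j Hj]]].
  rewrite E1 in Hi. rewrite E2 in Hj.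
  apply (interleaved_disjoint (bound tau) (answer1 tau) (answer2 tau)) with i j.
  - intro k. specialize (Hlegal1 k). now rewrite E1 in Hlegal1.
  - intro k. specialize (Hlegal2 k). now rewrite E2 in Hlegal2.
  - intro k. apply interleave_S.
  - congruence.
Qed.

Lemma I_wins_nat_II_wins_fin : I_wins_nat F F -> II_wins_fin (Fplus F) (Fcompl F).
Proof.
  intros [sigma [Hsigma Hwin]].
  exists (fun l => [greedy_answer sigma l]). intros Xs HXs.
  assert (Hplay := greedy_seq_spec sigma Xs
                     (fun h k => Fplus_meets _ _ (HXs k) (Hsigma h))).
  split.
  - intro k. split; [discriminate|]. intros x [<-|[]]. apply Hplay.
  - intro HU. apply (Hwin (greedy_seq sigma Xs)); [apply Hplay|].
    apply (filter_superset _ _ HU). intros m [k [<-|[]]]. now exists k.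
Qed.

Lemma I_wins_fin_II_wins_nat : I_wins_fin (Fplus F) (Fcompl F) -> II_wins_nat F F.
Proof.
  intros [sigma [Hsigma Hwin]].
  set (c := fun h => sigma (map (fun x => [x]) h)).
  exists (greedy_answer c). intros Xs HXs.
  set (n := greedy_seq c Xs).
  assert (Hplay : forall k, Xs k (n k) /\ c (prefix n k) (n k)).
  { apply greedy_seq_spec. intros h k.
    destruct (Fplus_meets _ _ (Hsigma (map (fun x => [x]) h)) (HXs k)) as [x [Hc HX]].
    eauto. }
  split; [apply Hplay|].
  apply NNPP. intro HU. apply (Hwin (fun k => [n k])).
  - intro k. split; [discriminate|]. intros x [<-|[]].
    replace (prefix (fun j => [n j]) k) with (map (fun x => [x]) (prefix n k))
      by (unfold prefix; now rewrite map_map).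
    apply Hplay.
  - intro HU'. apply HU, (filter_superset _ _ HU'). intros m [k [<-|[]]]. now exists k.
Qed.

Definition winning_II_fin (X Z : family) (tau : stratII_fin) : Prop :=
  forall Xs : nat -> setN, (forall k, X (Xs k)) ->
    (forall k, tau (prefix Xs (S k)) <> [] /\
               forall x, In x (tau (prefix Xs (S k))) -> Xs k x) /\
    Z (fun m => exists k, In m (tau (prefix Xs (S k)))).

Section WinningIIFin.

Variable tau : stratII_fin.
Hypothesis tau_wins : winning_II_fin (Fplus F) (Fcompl F) tau.

Lemma winning_II_fin_legal (p : list setN) (Y : setN) :
  Forall (Fplus F) p -> Fplus F Y ->
  tau (p ++ [Y]) <> [] /\ forall x, In x (tau (p ++ [Y])) -> Y x.
Proof.
  intros Hp HY.
  set (Xs := fun k => nth k (p ++ [Y]) (fun _ : nat => True)).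
  assert (HXs : forall k, Fplus F (Xs k)).
  { intro k. unfold Xs.
    destruct (nth_in_or_default k (p ++ [Y]) (fun _ => True)) as [Hi | ->].
    - apply in_app_or in Hi. destruct Hi as [Hi|[<-|[]]]; auto.
      now apply (proj1 (Forall_forall _ _) Hp).
    - exact Fplus_full. }
  assert (E : prefix Xs (S (length p)) = p ++ [Y]).
  { replace (S (length p)) with (length (p ++ [Y])) by (rewrite length_app; simpl; lia).
    apply prefix_nth. }
  assert (EY : Xs (length p) = Y) by apply nth_middle.
  destruct (proj1 (tau_wins Xs HXs) (length p)) as [Hne Hin].
  rewrite E, EY in *. auto.
Qed.

(* The points II may answer at position [p]; I plays this set in [G(F, omega, F)]. *)
Definition answerable (p : list setN) : setN :=
  fun x => exists Y, Fplus F Y /\ In x (tau (p ++ [Y])).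

Lemma filter_answerable (p : list setN) : Forall (Fplus F) p -> F (answerable p).
Proof.
  intros Hp. apply NNPP. intro Hn.
  destruct (winning_II_fin_legal p _ Hp (Fplus_complN _ Hn)) as [Hne Hin].
  destruct (tau (p ++ [complN (answerable p)])) as [|x l] eqn:Et; [contradiction|].
  apply (Hin x); [now left|].
  exists (complN (answerable p)). split; [now apply Fplus_complN|]. rewrite Et. now left.
Qed.

(* A move of I in [G(F^+, [omega]^{<omega}, F^c)] to which [tau] answers [x],
   whenever there is one; the default keeps the position made of [F^+] sets. *)
Definition witness (p : list setN) (x : nat) : setN :=
  epsilon (inhabits (fun _ => True))
    (fun Y => Fplus F Y /\ (answerable p x -> In x (tau (p ++ [Y])))).

Lemma witness_spec (p : list setN) (x : nat) :
  Fplus F (witness p x) /\ (answerable p x -> In x (tau (p ++ [witness p x]))).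
Proof.
  unfold witness. apply epsilon_spec.
  destruct (classic (answerable p x)) as [[Y [HY Hin]]|Hn].
  - exists Y. auto.
  - exists (fun _ => True). split; [exact Fplus_full | contradiction].
Qed.

Definition position (h : list nat) : list setN :=
  fold_left (fun p x => p ++ [witness p x]) h [].

Lemma position_snoc (h : list nat) (x : nat) :
  position (h ++ [x]) = position h ++ [witness (position h) x].
Proof. unfold position. now rewrite fold_left_app. Qed.

Lemma position_Fplus (h : list nat) : Forall (Fplus F) (position h).
Proof.
  induction h as [|x h IH] using rev_ind; [constructor|].
  rewrite position_snoc. apply Forall_app. split; [exact IH|].
  constructor; [apply witness_spec | constructor].
Qed.

Lemma I_wins_nat_of_winning_II_fin : I_wins_nat F F.
Proof.
  exists (fun h => answerable (position h)). split.
  - intro h. apply filter_answerable, position_Fplus.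
  - intros n Hn Hrange.
    set (Ys := fun k => witness (position (prefix n k)) (n k)).
    assert (E : forall k, position (prefix n k) = prefix Ys k).
    { induction k as [|k IH]; [reflexivity|].
      now rewrite !prefix_S, position_snoc, <- IH. }
    apply (proj2 (tau_wins Ys (fun k => proj1 (witness_spec _ _)))).
    apply (filter_superset _ _ Hrange). intros m [k <-]. exists k.
    rewrite prefix_S, <- E. now apply witness_spec.
Qed.

End WinningIIFin.

Lemma II_wins_fin_I_wins_nat : II_wins_fin (Fplus F) (Fcompl F) -> I_wins_nat F F.
Proof. intros [tau Htau]. exact (I_wins_nat_of_winning_II_fin tau Htau). Qed.

Lemma not_Ramsey_of_I_wins_nat : I_wins_nat F F -> ~ Ramsey F.
Proof.
  intros [sigma [Hsigma Hwin]] HR.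
  assert (Htree : is_F_tree F (obeys sigma)).
  { split; [split; [constructor | apply obeys_app]|].
    intros h Hh. exists (sigma h). split; [apply Hsigma|]. now constructor. }
  destruct (HR _ Htree) as [b [Hb Hbranch]].
  exact (Hwin b (obeys_branch sigma b Hb) Hbranch).
Qed.

Lemma I_wins_nat_of_not_Ramsey : ~ Ramsey F -> I_wins_nat F F.
Proof.
  intros HnR. apply not_all_ex_not in HnR as [T HT].
  apply imply_to_and in HT as [[[HT0 _] Hsucc] Hnobranch].
  (* Off the tree any set of [F] will do. *)
  set (sigma := fun h => epsilon (inhabits (fun _ : nat => True))
                  (fun X => F X /\ (T h -> forall n, X n -> T (h ++ [n])))).
  assert (Hsigma : forall h, F (sigma h) /\ (T h -> forall n, sigma h n -> T (h ++ [n]))).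
  { intro h. apply epsilon_spec. destruct (classic (T h)) as [Th|Th].
    - destruct (Hsucc h Th) as [X [HX HXn]]. exists X. auto.
    - exists (fun _ => True). split; [exact filter_full | contradiction]. }
  exists sigma. split; [apply Hsigma|].
  intros n Hn Hbranch. apply Hnobranch. exists n. split; [|exact Hbranch].
  intro k. induction k as [|k IH]; [exact HT0|].
  rewrite prefix_S. now apply Hsigma.
Qed.

End ProperFilter.

Theorem theorem2p21 (F : family) (HF : proper_filter F) :
  (I_wins_fin (Fplus F) (Fcompl F) <-> II_wins_nat F F) /\
  (II_wins_fin (Fplus F) (Fcompl F) <-> I_wins_nat F F) /\
  ~ I_wins_fin (Fplus F) (Fcompl F) /\
  (II_wins_fin (Fplus F) (Fcompl F) <-> ~ Ramsey F).
Proof.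
  assert (HnoI : ~ I_wins_fin (Fplus F) (Fcompl F)).
  { intro H. exact (not_II_wins_nat F HF (I_wins_fin_II_wins_nat F HF H)). }
  assert (Hdual : II_wins_fin (Fplus F) (Fcompl F) <-> I_wins_nat F F).
  { split; [apply II_wins_fin_I_wins_nat | apply I_wins_nat_II_wins_fin]; exact HF. }
  split; [|split; [exact Hdual | split; [exact HnoI|]]].
  - split; [apply I_wins_fin_II_wins_nat, HF|].
    intro H. now destruct (not_II_wins_nat F HF).
  - rewrite Hdual.
    split; [apply not_Ramsey_of_I_wins_nat | apply I_wins_nat_of_not_Ramsey]; exact HF.
Qed.
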